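(* Let $N\ge2$, $z=(z_1,\dots,z_N)\in\mathcal P_d^N$, and let $x=(x^i_j)_{1\le j\le i\le N}$ be any critical point of $\Phi^N$ restricted to the set of height-$N$ triangular arrays with $N$-th row equal to $z$ (viewed as a function of the free variables $x^i_j$, $1\le j\le i\le N-1$). Set $p_i=|x^i_1\cdots x^i_i|$. Then $$p_1=p_2^{1/2}=\dots=p_{N-1}^{1/(N-1)}=p_N^{1/N}=|z_1\cdots z_N|^{1/N}.$$
   Context: $\mathcal P_d$: $d\times d$ real symmetric positive definite matrices (an open subset of the space of symmetric matrices); $|\cdot|$ determinant. For a height-$N$ triangular array $x=(x^i_j)_{1\le j\le i\le N}$ with $x^i_j\in\mathcal P_d$, $\Phi^N(x)=\sum_{i=1}^{N-1}\sum_{j=1}^i\big(\operatorname{tr}[x^{i+1}_{j+1}(x^i_j)^{-1}]+\operatorname{tr}[x^i_j(x^{i+1}_j)^{-1}]\big)$. *)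

From HB Require Import structures.
From mathcomp Require Import all_boot all_order all_algebra.
From mathcomp Require Import all_classical all_reals all_analysis.
Set Implicit Arguments. Unset Strict Implicit. Unset Printing Implicit Defensive.
Import Order.TTheory GRing.Theory Num.Theory.
Local Open Scope ring_scope.

Definition posdef (R : realType) (d : nat) (A : 'M[R]_d) : Prop :=
  A^T = A /\ forall v : 'cV[R]_d, v != 0 -> 0 < (v^T *m A *m v) 0 0.

(* A height-N triangular array x = (x^i_j), 1 <= j <= i <= N, is encoded as a
   function nat -> nat -> 'M_d (1-based indices; only entries with
   1 <= j <= i <= N are meaningful). *)
Definition tri_array (R : realType) (d : nat) := nat -> nat -> 'M[R]_d.

Definition PhiN (R : realType) (d N : nat) (x : tri_array R d) : R :=
  \sum_(1 <= i < N) \sum_(1 <= j < i.+1)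
     (\tr (x i.+1 j.+1 *m invmx (x i j)) + \tr (x i j *m invmx (x i.+1 j))).

Definition perturb (R : realType) (d : nat) (x : tri_array R d)
  (i j : nat) (H : 'M[R]_d) (t : R) : tri_array R d :=
  fun i' j' => if (i' == i) && (j' == j) then x i j + t *: H else x i' j'.

(* x is a critical point of Phi^N restricted to arrays with fixed N-th row:
   the differential w.r.t. every free variable x^i_j (1 <= j <= i <= N-1),
   a point of the open set P_d of the space of symmetric matrices, vanishes,
   i.e. every directional derivative along a symmetric direction H is 0. *)
Definition critical_fixed_row (R : realType) (d N : nat) (x : tri_array R d) : Prop :=
  forall i j : nat, (1 <= j)%N -> (j <= i)%N -> (i <= N.-1)%N ->
  forall H : 'M[R]_d, H^T = H ->
    is_derive (0 : R) (1 : R) (fun t : R => PhiN N (perturb x i j H t)) 0.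

(* At a critical point, the derivative of PhiN at x^i_j in a symmetric direction H
   is tr (G H) for a symmetric matrix G; taking H = G forces G = 0, that is
     x^{i+1}_{j+1} + [j < i] x^{i-1}_j
       = x^i_j ((x^{i+1}_j)^-1 + [1 < j] (x^{i-1}_{j-1})^-1) x^i_j.
   As A^-1 + B^-1 = A^-1 (A + B) B^-1, the determinants of these equations along
   row k telescope in j to p_k^2 = p_{k+1} p_{k-1}, where p_0 = 1.  Hence
   p_k = p_1^k, and p_1 = |x^1_1| > 0 since a positive definite matrix is joined
   to the identity by a segment of invertible matrices. *)

From HB Require Import structures.
From mathcomp Require Import all_boot all_order all_algebra.
From mathcomp Require Import all_classical all_reals all_analysis.
From mathcomp Require Import ring zify.
Import Order.TTheory GRing.Theory Num.Theory numFieldNormedType.Exports.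
Set Implicit Arguments. Unset Strict Implicit. Unset Printing Implicit Defensive.
Local Open Scope classical_set_scope.
Local Open Scope ring_scope.

Lemma invmx_resolvent (R : comUnitRingType) n (A B : 'M[R]_n) :
  A \in unitmx -> B \in unitmx -> invmx A = invmx B + invmx A *m (B - A) *m invmx B.
Proof.
move=> uA uB; rewrite mulmxBr mulmxBl mulVmx // mul1mx -mulmxA mulmxV //.
by rewrite mulmx1 addrC subrK.
Qed.

Lemma det_addmx_invmx (R : fieldType) n (A B : 'M[R]_n) :
  A \in unitmx -> B \in unitmx ->
  \det (invmx A + invmx B) = \det (A + B) / (\det A * \det B).
Proof.
move=> uA uB; have -> : invmx A + invmx B = invmx A *m (B + A) *m invmx B.
  by rewrite mulmxDr mulmxDl mulVmx // mul1mx -mulmxA mulmxV // mulmx1 addrC.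
by rewrite !det_mulmx !det_inv addrC invfM; ring.
Qed.

Lemma trmx_sub_conj (R : comUnitRingType) n (A X C : 'M[R]_n) :
  A^T = A -> C^T = C -> X^T = X ->
  (A - invmx X *m C *m invmx X)^T = A - invmx X *m C *m invmx X.
Proof. by move=> AT CT XT; rewrite raddfB /= !trmx_mul trmx_inv AT CT XT mulmxA. Qed.

Lemma mxtrace_mul_if0l (R : pzRingType) n (b : bool) (H B : 'M[R]_n) :
  \tr ((if b then H else 0) *m B) = if b then \tr (H *m B) else 0.
Proof. by case: b; rewrite ?mul0mx ?mxtrace0. Qed.

Lemma mxtrace_mul_if0m (R : pzRingType) n (b : bool) (A H B : 'M[R]_n) :
  \tr (A *m (if b then H else 0) *m B) = if b then \tr (A *m H *m B) else 0.
Proof. by case: b; rewrite ?mulmx0 ?mul0mx ?mxtrace0. Qed.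

Lemma mxtrace_mul_trmx_eq0 (R : realDomainType) m n (M : 'M[R]_(m, n)) :
  \tr (M *m M^T) = 0 -> M = 0.
Proof.
have -> : \tr (M *m M^T) = \sum_i \sum_k M i k ^+ 2.
  by apply: eq_bigr => i _; rewrite mxE; apply: eq_bigr => k _; rewrite mxE expr2.
move=> /psumr_eq0P sum0; apply/matrixP => i k; rewrite mxE.
have /psumr_eq0P sumi0 := sum0 (fun i _ => sumr_ge0 _ (fun k _ => sqr_ge0 _)) i isT.
by apply/eqP; rewrite -sqrf_eq0 sumi0 // => ? _; exact: sqr_ge0.
Qed.

Lemma sum_triangle_delta (R : nmodType) (N i j : nat) (c : nat -> nat -> bool)
    (F : nat -> nat -> R) : (forall a b, c a b = (a == i) && (b == j)) ->
  \sum_(1 <= a < N) \sum_(1 <= b < a.+1) (if c a b then F a b else 0) =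
  if (1 <= i < N)%N && (1 <= j <= i)%N then F i j else 0.
Proof.
move=> cE.
rewrite (eq_bigr (fun a => if a == i then if (1 <= j < a.+1)%N then F a j else 0 else 0)).
  by rewrite -big_mkcond big_nat1_eq -if_and.
move=> a _; under eq_bigr do rewrite cE.
case: eqVneq => [->|ai]; first by rewrite -big_mkcondr big_nat1_eq.
by rewrite big1.
Qed.

Lemma telescope_prod_mul (R : comPzSemiRingType) (u v w : nat -> R) m n : (m <= n)%N ->
  (forall k, (m <= k < n)%N -> u k * w k = w k.+1 * v k) ->
  \prod_(m <= k < n) u k * w m = w n * \prod_(m <= k < n) v k.
Proof.
elim: n => [|n IHn] mn uvw.
  by move: mn; rewrite leqn0 => /eqP->; rewrite !big_geq // mulr1 mul1r.
case: (ltngtP m n.+1) mn => // [mn _|-> _]; last by rewrite !big_geq // mulr1 mul1r.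
rewrite !big_nat_recr //= mulrAC IHn // => [|k kn]; last by apply: uvw; lia.
by rewrite mulrAC [w n * _]mulrC uvw; [ring | lia].
Qed.

Lemma sqr_recurrence_expr (R : idomainType) (P : nat -> R) n : P 0%N = 1 ->
  (forall k, (0 < k < n)%N -> P k ^+ 2 = P k.+1 * P k.-1) ->
  (forall k, (k < n)%N -> P k != 0) ->
  forall k, (k <= n)%N -> P k = P 1%N ^+ k.
Proof.
move=> P0 Psqr Pneq0.
suff Pk : forall k, (k < n)%N -> P k = P 1%N ^+ k /\ P k.+1 = P 1%N ^+ k.+1.
  by case=> [|k] kn; [rewrite P0 | have [] := Pk k kn].
elim=> [|k IHk] kn; first by rewrite P0 expr0 expr1.
have [Pk Pk1] := IHk (ltnW kn); split => //.
apply: (mulIf (Pneq0 k (ltnW kn))).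
rewrite -[P k.+2 * P k]/(P k.+2 * P k.+1.-1) -Psqr; last by lia.
by rewrite Pk1 Pk -exprM -exprD; congr (_ ^+ _); lia.
Qed.

Lemma powR_exprn_inv (R : realType) (a : R) n : 0 <= a -> (0 < n)%N ->
  (a ^+ n) `^ (n%:R)^-1 = a.
Proof.
move=> a0 n0; rewrite -powR_mulrn // -powRrM mulfV ?powRr1 //.
by rewrite pnatr_eq0 -lt0n.
Qed.

Section matrix_limits.
Context {R : realType} {T : Type} {F : set_system T} {FF : Filter F}.

Lemma cvg_det n (M : T -> 'M[R]_n) (L : 'M[R]_n) :
  (forall i j, M x i j @[x --> F] --> L i j) -> \det (M x) @[x --> F] --> \det L.
Proof.
move=> ML; apply: cvg_big => [|s _]; first exact: add_continuous.
apply: cvgM; first exact: cvg_cst.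
by apply: cvg_big => [|i _]; [exact: mul_continuous | exact: ML].
Qed.

Lemma cvg_invmx n (M : T -> 'M[R]_n) (L : 'M[R]_n) : L \in unitmx ->
  (forall i j, M x i j @[x --> F] --> L i j) ->
  forall i j, invmx (M x) i j @[x --> F] --> invmx L i j.
Proof.
move=> uL ML i j; have detML := cvg_det ML.
have detL0 : \det L != 0 by rewrite -unitfE -unitmxE.
have -> : invmx L i j = (\det L)^-1 * cofactor L j i by rewrite /invmx uL !mxE.
have uM : \forall x \near F, M x \in unitmx.
  by near do rewrite unitmxE unitfE; exact: cvgr_neq0 detML detL0.
apply: cvg_trans (_ : (\det (M x))^-1 * cofactor (M x) j i @[x --> F] --> _).
  apply: near_eq_cvg; near=> x; rewrite /invmx (_ : M x \in unitmx); last by near: x.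
  by rewrite !mxE.
apply: cvgM; first exact: cvgV.
apply: cvgM; first exact: cvg_cst.
by apply: cvg_det => a b; rewrite !mxE; under eq_cvg do rewrite !mxE; exact: ML.
Unshelve. all: by end_near. Qed.

Lemma cvg_mxtrace_mulmx n (A : 'M[R]_n) (B : T -> 'M[R]_n) (L : 'M[R]_n) :
  (forall i j, B x i j @[x --> F] --> L i j) ->
  \tr (A *m B x) @[x --> F] --> \tr (A *m L).
Proof.
move=> BL; rewrite /mxtrace; under eq_cvg do under eq_bigr do rewrite mxE.
under eq_bigr do rewrite mxE.
apply: cvg_big => [|i _]; first exact: add_continuous.
apply: cvg_big => [|k _]; first exact: add_continuous.
exact: cvgM (cvg_cst _) (BL k i).
Qed.
End matrix_limits.

Lemma continuous_line_mx (R : realType) m n (A H : 'M[R]_(m, n)) i j :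
  continuous (fun t : R => (A + t *: H) i j).
Proof.
have -> : (fun t : R => (A + t *: H) i j) = fun t => A i j + t * H i j.
  by apply/funext => t; rewrite !mxE.
by move=> s; exact: cvgD (cvg_cst _) (cvgM cvg_id (cvg_cst _)).
Qed.
Arguments continuous_line_mx {R m n} A H i j.

Lemma is_derive_sum_seq (R : numFieldType) (V W : normedModType R) (I : eqType)
    (r : seq I) (h : I -> V -> W) (dh : I -> W) (x v : V) :
  (forall i, i \in r -> is_derive x v (h i) (dh i)) ->
  is_derive x v (fun y => \sum_(i <- r) h i y) (\sum_(i <- r) dh i).
Proof.
move=> hd; have -> : (fun y => \sum_(i <- r) h i y) = \sum_(i <- r | i \in r) h i.
  by apply/funext => y; rewrite fct_sumE big_seq.
rewrite big_seq; elim/big_ind2 : _ => [|f df g dg|]; first exact: is_derive_cst.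
  by move=> ? ?; exact: is_deriveD.
exact: hd.
Qed.

Section derivatives.
Variable R : realType.

Lemma is_derive_near_factor (f g : R -> R) (a : R) :
  (\forall t \near a, f t = f a + (t - a) * g t) -> {for a, continuous g} ->
  is_derive a 1 f (g a).
Proof.
move=> fE cg; apply/is_derive1_caratheodory.
exists (fun t => if t == a then g a else (f t - f a) / (t - a)); split.
- move=> t; case: eqVneq => [->|ta]; first by rewrite !subrr mulr0.
  by rewrite divfK // subr_eq0.
- rewrite /prop_for /continuous_at eqxx; apply: cvg_trans cg; apply: near_eq_cvg.
  near=> t; case: eqVneq => [->//|ta].
  by rewrite (near fE t) // addrC addKr [RHS]mulrC mulKf // subr_eq0.
- by rewrite eqxx.
Unshelve. all: by end_near. Qed.

Lemma is_derive_mxtrace_mul_invmx n (P Q H K : 'M[R]_n) : Q \in unitmx ->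
  is_derive (0 : R) 1 (fun t => \tr ((P + t *: H) *m invmx (Q + t *: K)))
    (\tr (H *m invmx Q) - \tr (P *m invmx Q *m K *m invmx Q)).
Proof.
move=> uQ.
pose g t := \tr (H *m invmx (Q + t *: K)) - \tr (P *m invmx Q *m K *m invmx (Q + t *: K)).
have -> : \tr (H *m invmx Q) - \tr (P *m invmx Q *m K *m invmx Q) = g 0.
  by rewrite /g scale0r addr0.
apply: is_derive_near_factor.
  have uQt : \forall t \near (0 : R), Q + t *: K \in unitmx.
    have := cvg_det (FF := nbhs_filter (0 : R)) (fun i j => continuous_line_mx Q K i j 0).
    rewrite scale0r addr0 => detQt.
    by near do rewrite unitmxE unitfE; apply: cvgr_neq0 detQt _; rewrite -unitfE -unitmxE.
  near=> t; rewrite /g !scale0r !addr0 subr0 mulmxDl mxtraceD.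
  have uQt1 : Q + t *: K \in unitmx by near: t.
  have trPQ : \tr (P *m invmx Q) =
      \tr (P *m invmx (Q + t *: K)) + t * \tr (P *m invmx Q *m K *m invmx (Q + t *: K)).
    rewrite {1}(invmx_resolvent uQ uQt1) [Q + _]addrC addrK mulmxDr mxtraceD.
    by rewrite -scalemxAr -scalemxAl -scalemxAr mxtraceZ !mulmxA.
  rewrite trPQ -scalemxAl mxtraceZ; ring.
rewrite /prop_for /continuous_at /g scale0r addr0.
apply: cvgB; apply: cvg_mxtrace_mulmx; apply: cvg_invmx => // i j;
  by rewrite -[Q in X in _ --> X]addr0 -(scale0r K); exact: continuous_line_mx.
Unshelve. all: by end_near. Qed.
End derivatives.

Section positive_definite.
Variable R : realType.

Lemma unitmx_quadform_gt0 n (A : 'M[R]_n) :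
  (forall v : 'cV[R]_n, v != 0 -> 0 < (v^T *m A *m v) 0 0) -> A \in unitmx.
Proof.
move=> Apos; rewrite unitmxE unitfE; apply/negP => /det0P[v v0 vA].
have vT0 : v^T != 0 by apply: contra v0 => /eqP vT0; rewrite -(trmxK v) vT0 trmx0.
by have := Apos _ vT0; rewrite trmxK vA mul0mx mxE ltxx.
Qed.

Lemma posdef_unitmx d (A : 'M[R]_d) : posdef A -> A \in unitmx.
Proof. by case=> _; exact: unitmx_quadform_gt0. Qed.

Lemma posdef_det_gt0 d (A : 'M[R]_d) : posdef A -> 0 < \det A.
Proof.
move=> Apd; have [_ Apos] := Apd.
pose f t := \det (1%:M + t *: (A - 1%:M)).
have f0 : f 0 = 1 by rewrite /f scale0r addr0 det1.
have f1 : f 1 = \det A by rewrite /f scale1r addrC subrK.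
have f_neq0 t : t \in `[0, 1] -> f t != 0.
  rewrite in_itv /= => /andP[t0 t1]; have [->|tn0] := eqVneq t 0; first by rewrite f0 oner_neq0.
  rewrite -unitfE -unitmxE; apply: unitmx_quadform_gt0 => v v0.
  have -> : 1%:M + t *: (A - 1%:M) = (1 - t) *: 1%:M + t *: A.
    by rewrite scalerBr scalerBl scale1r addrCA addrC.
  rewrite mulmxDr mulmxDl -!scalemxAr -!scalemxAl mulmx1.
  rewrite [X in 0 < X]mxE [(_ *: (v^T *m v)) 0 0]mxE [(_ *: (_ *m A *m v)) 0 0]mxE.
  apply: ltr_wpDl; last by apply: mulr_gt0; [rewrite lt_def tn0 | exact: Apos].
  apply: mulr_ge0; first by rewrite subr_ge0.
  by rewrite mxE; apply: sumr_ge0 => k _; rewrite mxE -expr2 sqr_ge0.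
have fcont : continuous f.
  by move=> t; apply: cvg_det => i j; exact: continuous_line_mx.
rewrite lt_def -f1 f_neq0 ?in_itv /= ?ler01 ?lexx //= leNgt; apply/negP => fA_lt0.
have [c c01 fc0] : exists2 c, c \in `[0, 1] & f c = 0.
  apply: IVT => //; first exact: continuous_subspaceT.
  by rewrite f0 ge_min le_max (ltW fA_lt0) ler01 !orbT.
by have := f_neq0 c c01; rewrite fc0 eqxx.
Qed.
End positive_definite.

(* The gradient of PhiN in the entry x^i_j for the trace pairing; the
   conditionals drop the neighbours x^{i-1}_{j-1} and x^{i-1}_j when they lie
   outside the triangle. *)
Definition PhiN_grad (R : realType) d (x : tri_array R d) (i j : nat) : 'M[R]_d :=
  invmx (x i.+1 j) + (if (1 < j)%N then invmx (x i.-1 j.-1) else 0)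
  - invmx (x i j) *m (x i.+1 j.+1 + (if (j < i)%N then x i.-1 j else 0)) *m invmx (x i j).

Definition row_det (R : realType) d (x : tri_array R d) (k : nat) : R :=
  \prod_(1 <= j < k.+1) \det (x k j).

Section critical_points.
Variables (R : realType) (d N : nat) (x : tri_array R d).
Hypothesis x_unit : forall i j, (1 <= j)%N -> (j <= i)%N -> (i <= N)%N -> x i j \in unitmx.
Hypothesis x_sym : forall i j, (1 <= j)%N -> (j <= i)%N -> (i <= N)%N -> (x i j)^T = x i j.

Lemma perturbE i j H t :
  perturb x i j H t = fun a b => x a b + t *: (if (a == i) && (b == j) then H else 0).
Proof.
apply/funext => a; apply/funext => b; rewrite /perturb.
by case: ifP => [/andP[/eqP-> /eqP->]|_]; rewrite ?scaler0 ?addr0.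
Qed.

Lemma is_derive_PhiN_perturb i j H : (1 <= j <= i)%N -> (i < N)%N ->
  is_derive (0 : R) 1 (fun t => PhiN N (perturb x i j H t)) (\tr (PhiN_grad x i j *m H)).
Proof.
move=> /andP[j1 ji] iN.
under eq_fun do rewrite perturbE /PhiN.
apply: is_derive_eq.
  apply: is_derive_sum_seq => a; rewrite mem_index_iota => aN.
  apply: is_derive_sum_seq => b; rewrite mem_index_iota => ba.
  by apply: is_deriveD; apply: is_derive_mxtrace_mul_invmx; apply: x_unit; lia.
rewrite /=; under eq_bigr do under eq_bigr do rewrite !mxtrace_mul_if0l !mxtrace_mul_if0m.
under eq_bigr do rewrite big_split /= !sumrB.
rewrite big_split !sumrB /=.
(* x^i_j occurs only in the summands indexed (i, j), (i-1, j-1) and (i-1, j). *)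
have c11 a b : ((a.+1 == i) && (b.+1 == j)) = (a == i.-1) && (b == j.-1).
  by apply/andP/andP => -[/eqP ? /eqP ?]; split; apply/eqP; lia.
have c10 a b : ((a.+1 == i) && (b == j)) = (a == i.-1) && (b == j).
  by apply/andP/andP => -[/eqP ? /eqP ?]; split; apply/eqP; lia.
rewrite (sum_triangle_delta _ _ c11) (sum_triangle_delta _ _ c10).
rewrite !(sum_triangle_delta _ _ (fun a b => erefl)).
have -> : [&& (0 < i < N)%N, (0 < j)%N & (j <= i)%N] by lia.
have -> : [&& (0 < i.-1 < N)%N, (0 < j.-1)%N & (j.-1 <= i.-1)%N] = (1 < j)%N by lia.
have -> : [&& (0 < i.-1 < N)%N, (0 < j)%N & (j <= i.-1)%N] = (j < i)%N by lia.
rewrite prednK; last by lia.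
have cyc (A B : 'M[R]_d) : \tr (A *m B *m H *m B) = \tr (B *m A *m B *m H).
  by rewrite mxtrace_mulC !mulmxA.
rewrite /PhiN_grad; case: (1 < j)%N; case: (j < i)%N;
  rewrite ?addr0 ?subr0 mulmxBl ?mulmxDr ?mulmxDl ?raddfB ?raddfD /= ?(mxtrace_mulC H) ?cyc; ring.
Qed.

Lemma trmx_PhiN_grad i j : (1 <= j <= i)%N -> (i < N)%N ->
  (PhiN_grad x i j)^T = PhiN_grad x i j.
Proof.
move=> /andP[j1 ji] iN.
apply: trmx_sub_conj; last (apply: x_sym; lia).
  rewrite linearD /= trmx_inv x_sym; [|lia..].
  by case: ifP => j2; rewrite ?trmx0 // trmx_inv x_sym //; lia.
rewrite linearD /= x_sym; [|lia..].
by case: ifP => ji1; rewrite ?trmx0 // x_sym //; lia.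
Qed.

Lemma PhiN_grad_eq0 i j : critical_fixed_row N x -> (1 <= j <= i)%N -> (i < N)%N ->
  PhiN_grad x i j = 0.
Proof.
move=> crit ji iN; have gsym := trmx_PhiN_grad ji iN.
have /andP[j1 ji'] := ji; have iN' : (i <= N.-1)%N by lia.
have [_ deriv0] := crit i j j1 ji' iN' _ gsym.
have [_ deriv_grad] := is_derive_PhiN_perturb (PhiN_grad x i j) ji iN.
by apply: mxtrace_mul_trmx_eq0; rewrite gsym -deriv_grad deriv0.
Qed.

Lemma row_det_sqr k : critical_fixed_row N x -> (0 < k < N)%N ->
  row_det x k ^+ 2 = row_det x k.+1 * row_det x k.-1.
Proof.
move=> crit /andP[k0 kN].
(* w j.+1 is the determinant of the left-hand side of the critical equation at
   (k, j); for 1 < j, w j is the determinant det_addmx_invmx extracts from its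
   right-hand side. *)
pose w j := if (1 < j)%N then \det (x k.+1 j + (if (j <= k)%N then x k.-1 j.-1 else 0)) else 1.
pose v j := \det (x k.+1 j) * (if (1 < j)%N then \det (x k.-1 j.-1) else 1).
have step j : (1 <= j < k.+1)%N -> \det (x k j) ^+ 2 * w j = w j.+1 * v j.
  move=> /andP[j0 jk].
  have [uX ua] : x k j \in unitmx /\ x k.+1 j \in unitmx by split; apply: x_unit; lia.
  have jk' : (1 <= j <= k)%N by lia.
  have /eqP := PhiN_grad_eq0 crit jk' kN.
  rewrite subr_eq0 => /eqP grad0.
  have -> : w j.+1 = \det (x k j) ^+ 2 *
      \det (invmx (x k.+1 j) + (if (1 < j)%N then invmx (x k.-1 j.-1) else 0)).
    rewrite /w ltnS j0 /= grad0 !det_mulmx det_inv; field.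
    by rewrite -unitfE -unitmxE.
  have ha : \det (x k.+1 j) != 0 by rewrite -unitfE -unitmxE.
  rewrite /w /v; case: ifP => j1; last by rewrite addr0 det_inv; field.
  have uc : x k.-1 j.-1 \in unitmx by apply: x_unit; lia.
  have hc : \det (x k.-1 j.-1) != 0 by rewrite -unitfE -unitmxE.
  rewrite -ltnS jk det_addmx_invmx //; field; exact/andP.
have := telescope_prod_mul (u := fun j => \det (x k j) ^+ 2) (isT : (1 <= k.+1)%N) step.
rewrite /w ltnn ltnS k0 ltnn addr0 mulr1 prodrXl => ->.
rewrite /row_det [in RHS]big_nat_recr //= big_split /=.
have -> : \prod_(1 <= j < k.+1) (if (1 < j)%N then \det (x k.-1 j.-1) else 1) =
    \prod_(1 <= j < k.-1.+1) \det (x k.-1 j).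
  rewrite big_ltn // big_add1 /= mul1r prednK //.
  by apply: eq_big_nat => i /andP[i1 _]; rewrite ltnS i1.
ring.
Qed.
End critical_points.

Theorem mainTheorem9 (R : realType) (d N : nat) (z : nat -> 'M[R]_d)
  (x : tri_array R d) :
  (2 <= N)%N ->
  (forall j, (1 <= j <= N)%N -> posdef (z j)) ->
  (forall i j, (1 <= j)%N -> (j <= i)%N -> (i <= N)%N -> posdef (x i j)) ->
  (forall j, (1 <= j <= N)%N -> x N j = z j) ->
  critical_fixed_row N x ->
  forall i : nat, (1 <= i <= N)%N ->
    (\det (\prod_(1 <= j < i.+1) x i j)) `^ (i%:R)^-1
    = (\det (\prod_(1 <= j < N.+1) z j)) `^ (N%:R)^-1.
Proof.
move=> _ _ x_pd xNz crit i /andP[i1 iN].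
have x_unit a b b1 ba aN : x a b \in unitmx := posdef_unitmx (x_pd a b b1 ba aN).
have x_sym a b b1 ba aN : (x a b)^T = x a b := (x_pd a b b1 ba aN).1.
have det_prod k : \det (\prod_(1 <= j < k.+1) x k j) = row_det x k.
  by rewrite (big_morph _ (@det_mulmx _ _) (det1 _ _)).
have -> : \prod_(1 <= j < N.+1) z j = \prod_(1 <= j < N.+1) x N j.
  by apply: eq_big_nat => j jN; rewrite xNz.
have row_gt0 k : (k <= N)%N -> 0 < row_det x k.
  move=> kN; rewrite /row_det big_seq_cond; apply: prodr_gt0 => j /andP[+ _].
  by rewrite mem_index_iota => jk; apply/posdef_det_gt0/x_pd; lia.
have row0 : row_det x 0 = 1 by rewrite /row_det big_geq.
have row_expr := sqr_recurrence_expr row0 (fun k => row_det_sqr x_unit x_sym crit)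
  (fun k kN => lt0r_neq0 (row_gt0 k (ltnW kN))).
have row1_ge0 : 0 <= row_det x 1 by apply/ltW/row_gt0; lia.
by rewrite !det_prod (row_expr i) // (row_expr N) // !powR_exprn_inv //; lia.
Qed.
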